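(* Let $p\ge1$ and $\gamma_1,\ldots,\gamma_p \in (0,1)$ be such that $\{1,\gamma_1,\ldots,\gamma_p\}$ is linearly independent over $\mathbb{Q}$. Then every $\vec{x} \in X_{\gamma_1} \times \cdots \times X_{\gamma_p}$, regarded as a sequence in $\Sigma_{2,p}^\omega$, satisfies $P(\vec{x},n)=(n+1)^p$ for every $n \geq 1$.
   Context: $\Sigma_2=\{0,1\}$, $\Sigma_2^\omega$ is the set of infinite binary sequences $x=x_1x_2\cdots$. A subword of $x$ of length $n$ is $x_{k+1}\cdots x_{k+n}$ for some $k\ge0$, and $P(x,n)$ is the number of distinct subwords of length $n$. A sequence is recurrent if every subword occurs infinitely often. For a finite word $u$ over $\{0,1\}$, $|u|_1$ is the number of $1$'s in $u$; $x$ is balanced if $||u|_1-|v|_1|\le 1$ for all subwords $u,v$ of $x$ of the same length. For $\gamma\in[0,1]$, $X_\gamma$ is the set of $x\in\Sigma_2^\omega$ that are recurrent, balanced, and satisfy $\lim_{n\to\infty}\frac1n\#\{1\le j\le n: x_j=1\}=\gamma$. $\Sigma_{2,p}=\Sigma_2^p$ is the alphabet of $p$-tuples, and a sequence $\vec x=\vec x_1\vec x_2\cdots\in\Sigma_{2,p}^\omega$ with $\vec x_i=(x^{(1)}_i,\ldots,x^{(p)}_i)$ is identified with the $p$-tuple of binary sequences $(x^{(1)},\ldots,x^{(p)})$, where $x^{(j)}=x^{(j)}_1x^{(j)}_2\cdots$; subwords and $P(\vec x,n)$ are taken over the alphabet $\Sigma_{2,p}$. *)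

From HB Require Import structures.
From mathcomp Require Import all_boot all_order all_algebra.
From mathcomp Require Import boolp classical_sets reals topology normedtype sequences.
Set Implicit Arguments. Unset Strict Implicit. Unset Printing Implicit Defensive.
Import Order.TTheory GRing.Theory Num.Theory numFieldNormedType.Exports.

(* Infinite binary sequences x = x_1 x_2 ... are functions nat -> bool,
   with x_{i+1} = x i (0-based indexing). *)
Definition binseq := nat -> bool.

Definition ones (x : binseq) (k n : nat) : nat := \sum_(k <= i < k + n) (x i : nat).

Definition balanced (x : binseq) : Prop :=
  forall n k l : nat, (`|(ones x k n)%:Z - (ones x l n)%:Z| <= 1)%R.

Definition recurrent (x : binseq) : Prop :=
  forall k n N : nat, exists m, (N <= m)%N /\ forall i, (i < n)%N -> x (m + i) = x (k + i).

Definition freq (R : realType) (x : binseq) (n : nat) : R :=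
  ((ones x 0 n)%:R / n%:R)%R.

Local Open Scope classical_set_scope.
Definition X_gamma (R : realType) (gamma : R) (x : binseq) : Prop :=
  [/\ recurrent x, balanced x & freq R x @ \oo --> gamma].
Local Close Scope classical_set_scope.

(* Sequences over Sigma_{2,p}: a p-tuple of binary sequences. *)
Definition letter (p : nat) (xs : 'I_p -> binseq) (i : nat) : {ffun 'I_p -> bool} :=
  [ffun j => xs j i].

Definition subword (p : nat) (xs : 'I_p -> binseq) (k n : nat) : n.-tuple {ffun 'I_p -> bool} :=
  [tuple letter xs (k + i) | i < n].

Definition complexity (p : nat) (xs : 'I_p -> binseq) (n : nat) : nat :=
  #|[set w : n.-tuple {ffun 'I_p -> bool} | `[< exists k, w = subword xs k n >] ]|.

Definition Q_lin_indep_1 (R : realType) (p : nat) (gamma : 'I_p -> R) : Prop :=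
  forall (c0 : rat) (c : 'I_p -> rat),
    (ratr c0 + \sum_(j < p) ratr (c j) * gamma j = 0 :> R)%R ->
    c0 = 0%R /\ forall j, c j = 0%R.

From HB Require Import structures.
From mathcomp Require Import all_boot all_order all_algebra.
From mathcomp Require Import boolp classical_sets reals topology normedtype sequences.
From mathcomp Require Import ring lra zify.
Import Order.TTheory GRing.Theory Num.Theory.
Import numFieldNormedType.Exports.

Set Implicit Arguments.
Unset Strict Implicit.
Unset Printing Implicit Defensive.

(* Upper bound: in a balanced word the number of 1's in the factor of length
   [i] at position [k] takes one of two consecutive values, and the count
   functions of two positions are comparable, so a factor of length [n] is
   determined by how many of its prefixes carry the larger value, a number in
   [0, n]; this gives at most [(n + 1) ^ p] factors.
   Lower bound: a balanced word of frequency [gamma] is mechanical, its prefix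
   counts staying within one of a line [k gamma + b]. Since [1, gamma_1, ...,
   gamma_p] are independent, Kronecker's theorem makes the intercepts
   [k gamma_j + b_j] jointly dense modulo 1, so each tuple of phases
   [c_j <= n] is realised at some position, and the [(n + 1) ^ p] windows so
   obtained differ because [d gamma_j] is never an integer for [d <> 0]. *)

Lemma onesD (x : binseq) k a b : ones x k (a + b) = ones x k a + ones x (k + a) b.
Proof. by rewrite /ones addnA (@big_cat_nat _ _ _ (k + a)) //; lia. Qed.

Lemma ones0 (x : binseq) k : ones x k 0 = 0.
Proof. by rewrite /ones addn0 big_geq. Qed.

Lemma onesS (x : binseq) k i : ones x k i.+1 = ones x k i + x (k + i).
Proof. by rewrite -addn1 onesD /ones addn1 big_nat1. Qed.

Section BalancedWord.
Variable x : binseq.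
Hypothesis x_bal : balanced x.

Lemma ones_leS k l n : ones x k n <= (ones x l n).+1.
Proof.
have := x_bal n k l; rewrite ler_norml => /andP[_].
move: (ones x k n) (ones x l n) => a b; lia.
Qed.

(* Once one count function falls strictly behind the other, balance of the
   two windows starting there keeps it from overtaking. *)
Lemma ones_total k k' :
  (forall i, ones x k i <= ones x k' i) \/ (forall i, ones x k' i <= ones x k i).
Proof.
case: (pselect (forall i, ones x k i <= ones x k' i)) => [|/existsNP[i /negP]]; first by left.
rewrite -ltnNge => lt_i; right => l; rewrite leqNgt; apply/negP => lt_l.
have [il|li|eq_il] := ltngtP i l; last by subst; lia.
- have := onesD x k i (l - i); have := onesD x k' i (l - i).
  have := ones_leS (k' + i) (k + i) (l - i); rewrite subnKC ?(ltnW il) //; lia.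
- have := onesD x k l (i - l); have := onesD x k' l (i - l).
  have := ones_leS (k + l) (k' + l) (i - l); rewrite subnKC ?(ltnW li) //; lia.
Qed.

Definition least_ones i :=
  if `[< exists k, ones x k i < ones x 0 i >] then (ones x 0 i).-1 else ones x 0 i.

Lemma least_onesP i k : least_ones i <= ones x k i <= (least_ones i).+1.
Proof.
rewrite /least_ones; case: asboolP => [[k0 lt_k0]|no_lt].
- by have := ones_leS 0 k i; have := ones_leS k k0 i; lia.
- have : ~~ (ones x k i < ones x 0 i) by apply/negP => lt_k; apply: no_lt; exists k.
  by have := ones_leS k 0 i; lia.
Qed.

(* Since every count is [least_ones] or one more, and the count functions are
   totally ordered, the number of excesses determines the whole count profile. *)
Definition excess n k := \sum_(i < n) (ones x k i.+1 - least_ones i.+1).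

Lemma excess_le n k : excess n k <= n.
Proof.
rewrite -[leqRHS]card_ord -sum1_card; apply: leq_sum => i _.
by have := least_onesP i.+1 k; lia.
Qed.

Lemma excess_inj n k k' : excess n k = excess n k' ->
  forall i, i <= n -> ones x k i = ones x k' i.
Proof.
wlog le_kk' : k k' / forall i, ones x k i <= ones x k' i.
  by move=> wlogH; case: (ones_total k k') => ? ? ? ?; [|symmetry]; apply: wlogH.
move=> eq_exc [|i] lt_in; first by rewrite !ones0.
have le_exc (l : 'I_n) : true ->
    ones x k l.+1 - least_ones l.+1 <= ones x k' l.+1 - least_ones l.+1.
  by move=> _; apply: leq_sub2r.
have := @sumnB _ (index_enum 'I_n) xpredT _ _ le_exc.
rewrite -/(excess n k) -/(excess n k') eq_exc subnn.
move/eqP; rewrite sum_nat_eq0 => /forallP /(_ (Ordinal lt_in)) /= /eqP.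
by have := least_onesP i.+1 k; have := least_onesP i.+1 k'; have := le_kk' i.+1; lia.
Qed.

End BalancedWord.

Lemma subword_eq_ones (p : nat) (xs : 'I_p -> binseq) k k' n :
  subword xs k n = subword xs k' n <->
  forall j i, i <= n -> ones (xs j) k i = ones (xs j) k' i.
Proof.
split=> [eq_w j|eq_ones].
- elim=> [|i IH] lt_in; first by rewrite !ones0.
  rewrite !onesS IH 1?ltnW //; congr (_ + _).
  have := congr1 (fun w => tnth w (Ordinal lt_in)) eq_w; rewrite !tnth_mktuple.
  by move/ffunP/(_ j); rewrite !ffunE => ->.
- apply: eq_from_tnth => l; rewrite !tnth_mktuple; apply/ffunP => j; rewrite !ffunE.
  have := eq_ones j l.+1 (ltn_ord l); have := eq_ones j l (ltnW (ltn_ord l)).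
  by rewrite !onesS => ->; case: (xs j (k + l)); case: (xs j (k' + l)) => //=; lia.
Qed.

Lemma complexity_le (p : nat) (xs : 'I_p -> binseq) n :
  (forall j, balanced (xs j)) -> complexity xs n <= n.+1 ^ p.
Proof.
move=> xs_bal; rewrite /complexity; set S := [set w | _].
have /choice[pos posP] : forall w, exists k, w \in S -> w = subword xs k n.
  move=> w; case: (boolP (w \in S)) => [|_]; last by exists 0.
  by rewrite inE => /asboolP[k ->]; exists k.
pose profile w : {ffun 'I_p -> 'I_n.+1} := [ffun j => inord (excess (xs j) n (pos w))].
rewrite -(@card_in_imset _ _ profile S); last first.
  move=> w w' w_S w'_S /ffunP eq_prof; rewrite (posP w w_S) (posP w' w'_S).
  apply/subword_eq_ones => j.
  apply: excess_inj; first exact: xs_bal.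
  have := eq_prof j; rewrite !ffunE => /(congr1 val).
  by rewrite /= !inordK // ltnS excess_le.
by apply: leq_trans (max_card _) _; rewrite card_ffun !card_ord.
Qed.

Lemma ones_blocks (x : binseq) l N : ones x 0 (N * l) = \sum_(r < N) ones x (r * l) l.
Proof.
elim: N => [|N IH]; first by rewrite mul0n ones0 big_ord0.
by rewrite big_ord_recr /= -IH mulSnr onesD add0n.
Qed.

Lemma ones_blocks_bounds (x : binseq) : balanced x -> forall k l N,
  N * ones x k l <= ones x 0 (N * l) + N /\ ones x 0 (N * l) <= N * (ones x k l).+1.
Proof.
move=> x_bal k l N; rewrite ones_blocks; split.
- rewrite -[X in _ <= _ + X](card_ord N) -sum1_card -big_split.
  rewrite -[X in X * _](card_ord N) -sum_nat_const.
  by apply: leq_sum => r _ /=; rewrite addn1 ones_leS.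
- rewrite -[X in _ <= X * _](card_ord N) -sum_nat_const.
  by apply: leq_sum => r _; apply: ones_leS.
Qed.

Local Open Scope classical_set_scope.
Local Open Scope ring_scope.

Section Kronecker.
Variable R : realType.

Definition fract (x : R) : R := x - (Num.floor x)%:~R.

Lemma fract_ge0 x : 0 <= fract x.
Proof. by rewrite /fract subr_ge0 floor_le. Qed.

Lemma fract_lt1 x : fract x < 1.
Proof. by rewrite /fract; have := floorD1_gt x; rewrite intrD; lra. Qed.

Lemma truncn_eq_dist (a b : R) : 0 <= a -> 0 <= b ->
  Num.truncn a = Num.truncn b -> `|a - b| < 1.
Proof.
move=> /truncn_itv + /truncn_itv + eq_ab; rewrite eq_ab -!natr1 ltr_norml.
by move=> /andP[? ?] /andP[? ?]; apply/andP; split; lra.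
Qed.

(* Dirichlet's simultaneous approximation, by pigeonhole on the boxes of side
   [1/M] containing the fractional parts of [k g_i], [k <= M ^ p]. *)
Lemma dirichlet (p : nat) (g : nat -> R) (e : R) : 0 < e ->
  exists q : nat, (0 < q)%N /\ exists m : nat -> int,
    forall i, (i < p)%N -> `|q%:R * g i - (m i)%:~R| < e.
Proof.
move=> e_gt0; pose M := (Num.Def.archi_bound e^-1).+1.
have M_gt0 : 0 < M%:R :> R by rewrite ltr0n.
have eM_gt1 : 1 < e * M%:R.
  have : e^-1 < M%:R.
    apply: lt_trans (archi_boundP _) _; first by rewrite invr_ge0 ltW.
    by rewrite ltr_nat.
  by move=> ?; rewrite -[X in X < _](mulfV (lt0r_neq0 e_gt0)) ltr_pM2l.
pose cell k i := Num.truncn (M%:R * fract (k%:R * g i)).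
have cell_lt k i : (cell k i < M)%N.
  rewrite truncn_lt_nat ?mulr_ge0 ?ler0n ?fract_ge0 //.
  by rewrite -ltr_pdivlMl // mulVf ?fract_lt1 ?lt0r_neq0.
pose box (k : 'I_(M ^ p).+1) : {ffun 'I_p -> 'I_M} := [ffun i : 'I_p => inord (cell k i)].
have [a [b [lt_ab eq_cell]]] : exists a b : nat,
    (a < b)%N /\ forall i, (i < p)%N -> cell a i = cell b i.
  have /injectivePn[k1 [k2 neq_k eq_box]] : ~~ injectiveb box.
    by apply/injectiveP => /leq_card; rewrite card_ffun !card_ord ltnn.
  have eq_cell (k k' : 'I_(M ^ p).+1) i : box k = box k' -> (i < p)%N -> cell k i = cell k' i.
    move=> /ffunP + lt_ip => /(_ (Ordinal lt_ip)); rewrite !ffunE => /(congr1 val).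
    by rewrite /= !inordK.
  have [lt_k|lt_k|eq_k] := ltngtP k1 k2; last by rewrite (val_inj eq_k) eqxx in neq_k.
  - by exists k1, k2; split=> // i; apply: eq_cell.
  - by exists k2, k1; split=> // i; apply: eq_cell.
exists (b - a)%N; split; first by rewrite subn_gt0.
exists (fun i => Num.floor (b%:R * g i) - Num.floor (a%:R * g i)) => i lt_ip.
have -> : (b - a)%N%:R * g i - (Num.floor (b%:R * g i) - Num.floor (a%:R * g i))%:~R
        = fract (b%:R * g i) - fract (a%:R * g i).
  by rewrite /fract (natrB _ (ltnW lt_ab)) intrD intrN; ring.
rewrite -(ltr_pM2r M_gt0) (lt_trans _ eM_gt1) // -(gtr0_norm M_gt0) -normrM mulrBl.
rewrite ![_ * M%:R]mulrC; apply: truncn_eq_dist; rewrite ?mulr_ge0 ?ler0n ?fract_ge0 //.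
exact/esym/eq_cell.
Qed.

Definition int_lin_indep (p : nat) (g : nat -> R) :=
  forall (c0 : int) (c : nat -> int),
    c0%:~R + \sum_(i < p) (c i)%:~R * g i = 0 -> forall i, (i < p)%N -> c i = 0.

Section Ratios.
Variables (p q : nat) (g : nat -> R) (m : nat -> int).
Hypotheses (g_indep : int_lin_indep p.+1 g) (q_gt0 : (0 < q)%N).

Let h i := q%:R * g i - (m i)%:~R.

Lemma approx_neq0 : h p != 0.
Proof.
apply/eqP => hp0.
pose c i : int := if i == p then q%:Z else 0.
have sum0 : (- m p)%:~R + \sum_(i < p.+1) (c i)%:~R * g i = 0.
  rewrite big_ord_recr /= /c eqxx big1 => [|i _]; last by rewrite ltn_eqF ?mul0r.
  by rewrite add0r intrN -hp0 /h; ring.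
have := g_indep sum0 (ltnSn p); rewrite /c eqxx => -[q0].
by move: q_gt0; rewrite q0.
Qed.

Lemma int_lin_indep_ratio : int_lin_indep p (fun i => - h i / h p).
Proof.
move=> c0 c eq0 i lt_ip.
pose c' j := if j == p then c0 * q%:Z else - (c j * q%:Z).
pose c0' := - (c0 * m p) + \sum_(j < p) c j * m j.
have : c0'%:~R + \sum_(j < p.+1) (c' j)%:~R * g j
       = h p * (c0%:~R + \sum_(j < p) (c j)%:~R * (- h j / h p)).
  rewrite big_ord_recr /= {2}/c' eqxx mulrDr mulr_sumr.
  have -> : \sum_(j < p) h p * ((c j)%:~R * (- h j / h p))
          = \sum_(j < p) ((c j * m j)%:~R + (c' j)%:~R * g j).
    apply: eq_bigr => j _; rewrite /c' ltn_eqF // /h intrN !intrM -pmulrn.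
    by field; apply: approx_neq0.
  by rewrite big_split /= /c0' intrD intrN raddf_sum /= /h !intrM -pmulrn; ring.
rewrite eq0 mulr0 => /g_indep/(_ i (ltnW lt_ip))/eqP; rewrite /c' ltn_eqF // oppr_eq0 mulf_eq0.
by case/orP=> [/eqP //|/eqP[q0]]; move: q_gt0; rewrite q0.
Qed.

End Ratios.

Lemma normr_mul_fract (a e x : R) : `|a| < e -> `|a * fract x| < e.
Proof.
move=> lt_ae; rewrite normrM (ger0_norm (fract_ge0 x)).
by apply: le_lt_trans lt_ae; apply: ler_piMr; rewrite ?normr_ge0 ?ltW ?fract_lt1.
Qed.

(* A Dirichlet approximation gives a short vector
   [h = q g - m0]; integer multiples of [h] adjust the last coordinate within
   [|h_p|], and the first [p] coordinates are corrected by induction, applied to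
   the independent ratios [- h_i / h_p]. *)
Lemma kronecker (p : nat) (g : nat -> R) : int_lin_indep p g ->
  forall (y : nat -> R) (d : R), 0 < d ->
  exists (k : int) (m : nat -> int),
    forall i, (i < p)%N -> `|k%:~R * g i - (m i)%:~R - y i| < d.
Proof.
elim: p g => [|p IH] g g_indep y d d_gt0; first by exists 0, (fun=> 0).
have d2_gt0 : 0 < d / 2 by rewrite divr_gt0.
have [q [q_gt0 [m0 h_small]]] := dirichlet p.+1 g d2_gt0.
pose h i := q%:R * g i - (m0 i)%:~R.
have hp_neq0 : h p != 0 := approx_neq0 m0 g_indep q_gt0.
pose beta i := - h i / h p.
have [k' [m' approx']] := IH beta (int_lin_indep_ratio (m := m0) g_indep q_gt0)
  (fun i => y i + y p * beta i) _ d2_gt0.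
pose w := (y p - k'%:~R) / h p; pose t := Num.floor w.
exists (t * q%:Z), (fun i => if i == p then t * m0 p - k' else t * m0 i + m' i).
move=> i; rewrite ltnS leq_eqVlt => /orP[/eqP-> | lt_ip].
- rewrite eqxx.
  have -> : (t * q%:Z)%:~R * g p - (t * m0 p - k')%:~R - y p = - (h p * fract w).
    by rewrite /fract -/t /w /h !intrM intrB -pmulrn; field.
  by rewrite normrN (lt_trans (normr_mul_fract _ (h_small p _))) //; lra.
- rewrite ltn_eqF //.
  have -> : (t * q%:Z)%:~R * g i - (t * m0 i + m' i)%:~R - y i
          = (k'%:~R * beta i - (m' i)%:~R - (y i + y p * beta i)) - h i * fract w.
    by rewrite /fract -/t /w /beta /h !intrM intrD -pmulrn; field.
  apply: le_lt_trans (ler_normB _ _) _.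
  have := approx' i lt_ip; have := normr_mul_fract w (h_small i (ltnW lt_ip)); lra.
Qed.

(* A negative multiplier [-(n+1)] becomes positive after adding [(n+1) q],
   with [q] a Dirichlet denominator for a small enough error. *)
Lemma kronecker_nat (p : nat) (g : nat -> R) : int_lin_indep p g ->
  forall (y : nat -> R) (d : R), 0 < d ->
  exists (k : nat) (m : nat -> int),
    forall i, (i < p)%N -> `|k%:R * g i - (m i)%:~R - y i| < d.
Proof.
move=> g_indep y d d_gt0; have d2_gt0 : 0 < d / 2 by rewrite divr_gt0.
have [[n|n] [m approx]] := kronecker g_indep y d2_gt0.
  by exists n, m => i lt_ip; apply: lt_trans (approx i lt_ip) _; lra.
have n1_gt0 : 0 < n.+1%:R :> R by rewrite ltr0n.
have [q [q_gt0 [m1 h_small]]] := dirichlet p g (divr_gt0 d2_gt0 n1_gt0).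
exists (n.+1 * q - n.+1)%N, (fun i => m i + n.+1%:Z * m1 i) => i lt_ip.
have -> : (n.+1 * q - n.+1)%N%:R * g i - (m i + n.+1%:Z * m1 i)%:~R - y i
    = ((Negz n)%:~R * g i - (m i)%:~R - y i) + n.+1%:R * (q%:R * g i - (m1 i)%:~R).
  rewrite natrB ?leq_pmulr //.
  by rewrite NegzE intrD intrM intrN natrM -!pmulrn; ring.
apply: le_lt_trans (ler_normD _ _) _; rewrite normrM (gtr0_norm n1_gt0).
have := approx i lt_ip; have := h_small i lt_ip; rewrite ltr_pdivlMr // mulrC; lra.
Qed.

End Kronecker.

Section Frequency.
Variable R : realType.

Lemma le_cvg_frequently (u : nat -> R) (l c : R) : u @ \oo --> l ->
  (forall M, exists2 m, (M <= m)%N & c <= u m) -> c <= l.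
Proof.
move=> u_l often; rewrite leNgt; apply/negP => lt_lc.
have lc_gt0 : 0 < c - l by rewrite subr_gt0.
have [M _ near_l] := @cvgr_dist_lt _ _ _ _ _ u l u_l (c - l) lc_gt0.
have [m le_Mm le_cu] := often M.
by have := near_l m le_Mm; rewrite /= ltr_norml => /andP[? _]; lra.
Qed.

Lemma ge_cvg_frequently (u : nat -> R) (l c : R) : u @ \oo --> l ->
  (forall M, exists2 m, (M <= m)%N & u m <= c) -> l <= c.
Proof.
move=> u_l often; rewrite -lerN2; apply: (le_cvg_frequently (cvgN u_l)) => M.
by have [m le_Mm le_uc] := often M; exists m; rewrite // lerN2.
Qed.

Lemma ones_freq_bounds (x : binseq) (g : R) : balanced x -> freq R x @ \oo --> g ->
  forall k l, `|(ones x k l)%:R - l%:R * g| <= 1.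
Proof.
move=> x_bal x_freq k [|l]; first by rewrite ones0 mul0r subr0 normr0 ler01.
set a := ones x k l.+1; set L := l.+1.
have L_gt0 : 0 < L%:R :> R by rewrite ltr0n.
have freq_blocks N : freq R x (N.+1 * L) * (N.+1 * L)%:R = (ones x 0 (N.+1 * L))%:R.
  by rewrite /freq divfK // pnatr_eq0 muln_eq0.
have NL_gt0 N : 0 < (N.+1 * L)%:R :> R by rewrite ltr0n muln_gt0.
have le_MNL M : (M <= M.+1 * L)%N by rewrite mulSn; lia.
have g_lo : (a%:R - 1) / L%:R <= g.
  apply: (le_cvg_frequently x_freq) => M; exists (M.+1 * L)%N; first exact: le_MNL.
  rewrite -(ler_pM2r (NL_gt0 M)) freq_blocks natrM mulrCA divfK ?lt0r_neq0 //.
  have [+ _] := ones_blocks_bounds x_bal k L M.+1; rewrite -(ler_nat R) natrD natrM.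
  lra.
have g_hi : g <= (a%:R + 1) / L%:R.
  apply: (ge_cvg_frequently x_freq) => M; exists (M.+1 * L)%N; first exact: le_MNL.
  rewrite -(ler_pM2r (NL_gt0 M)) freq_blocks natrM mulrCA divfK ?lt0r_neq0 //.
  have [_] := ones_blocks_bounds x_bal k L M.+1; rewrite -(ler_nat R) natrM -natr1.
  lra.
move: g_lo g_hi; rewrite ler_pdivrMr // ler_pdivlMr // ler_norml; lra.
Qed.

(* [b] is the supremum of the deviations [ones x 0 k - k g], which differ
   pairwise by at most 1 since they are window counts minus their mean. *)
Lemma ones_intercept (x : binseq) (g : R) : balanced x -> freq R x @ \oo --> g ->
  exists b : R, forall k, k%:R * g + b - 1 <= (ones x 0 k)%:R <= k%:R * g + b.
Proof.
move=> x_bal x_freq; pose dev k := (ones x 0 k)%:R - k%:R * g.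
have dev_close k m : `|dev m - dev k| <= 1.
  wlog le_km : k m / (k <= m)%N.
    by move=> wlogH; case: (leqP k m) => [|/ltnW] /wlogH; rewrite // distrC.
  have [d ->] : exists d, m = (k + d)%N by exists (m - k)%N; rewrite subnKC.
  have -> : dev (k + d)%N - dev k = (ones x k d)%:R - d%:R * g.
    by rewrite /dev onesD add0n !natrD; ring.
  exact: ones_freq_bounds.
have dev_sup : has_sup (range dev).
  split; first by exists (dev 0), 0.
  by exists (dev 0 + 1) => _ [k _ <-]; have := dev_close 0 k; rewrite ler_norml; lra.
exists (sup (range dev)) => k.
have le_sup : dev k <= sup (range dev) by apply: sup_upper_bound => //; exists k.
have sup_le : sup (range dev) <= dev k + 1.
  apply: ge_sup => [|_ [m _ <-]]; first by exists (dev 0), 0.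
  by have := dev_close k m; rewrite ler_norml; lra.
by move: le_sup sup_le; rewrite /dev => ? ?; apply/andP; split; lra.
Qed.

End Frequency.

Section LowerBound.
Variable R : realType.

Lemma floorDN_nonint (z : R) : z \isn't a Num.int -> Num.floor z + Num.floor (- z) = -1.
Proof.
move=> /negbTE z_nonint.
by rewrite [Num.floor (- z)]floorNceil opprK ceil_floor z_nonint opprD addrA subrr add0r.
Qed.

Definition ord_ext (p : nat) (f : 'I_p -> R) (i : nat) : R :=
  if insub i is Some j then f j else 0.

Lemma ord_extE (p : nat) (f : 'I_p -> R) (j : 'I_p) : ord_ext f j = f j.
Proof. by rewrite /ord_ext valK. Qed.

Section QIndependence.
Variables (p : nat) (gamma : 'I_p -> R).
Hypothesis gamma_indep : Q_lin_indep_1 gamma.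

Lemma Q_lin_indep_int : int_lin_indep p (ord_ext gamma).
Proof.
move=> c0 c eq0 i lt_ip.
have : ratr c0%:Q + \sum_(j < p) ratr (c j)%:Q * gamma j = 0.
  by rewrite -[RHS]eq0 ratr_int; congr (_ + _); apply: eq_bigr => j _; rewrite ratr_int ord_extE.
by case/gamma_indep=> _ /(_ (Ordinal lt_ip))/eqP; rewrite intr_eq0 => /eqP.
Qed.

Lemma Q_lin_indep_nonint j (d : int) : d != 0 -> d%:~R * gamma j \isn't a Num.int.
Proof.
move=> d_neq0; apply/negP => /intrP[M eq_M].
pose c j' : rat := if j' == j then d%:Q else 0.
have : ratr (- M)%:Q + \sum_(j' < p) ratr (c j') * gamma j' = 0.
  rewrite (bigD1 j) //= big1 => [|j' /negbTE neq_j]; last by rewrite /c neq_j rmorph0 mul0r.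
  by rewrite /c eqxx addr0 !ratr_int eq_M intrN addNr.
by case/gamma_indep=> _ /(_ j); rewrite /c eqxx => /eqP; rewrite intr_eq0 (negbTE d_neq0).
Qed.

End QIndependence.

Lemma exists_pos_lower_bound (T : finType) (f : T -> R) :
  (forall t, 0 < f t) -> exists2 e, 0 < e & forall t, e <= f t.
Proof.
move=> f_gt0.
suff [e e_gt0 le_e] : exists2 e, 0 < e & forall t, t \in enum T -> e <= f t.
  by exists e => // t; apply: le_e; rewrite mem_enum.
elim: (enum T) => [|t0 s [e e_gt0 le_e]]; first by exists 1.
exists (Order.min e (f t0)); first by rewrite lt_min e_gt0 f_gt0.
by move=> t; rewrite inE ge_min => /orP[/eqP->|/le_e->]; rewrite ?lexx ?orbT.
Qed.

Lemma mechanical_ones_eq (x : binseq) (g b : R) (k : nat) (N : int) :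
  (forall k, k%:R * g + b - 1 <= (ones x 0 k)%:R <= k%:R * g + b) ->
  N%:~R < k%:R * g + b < (N + 1)%:~R -> (ones x 0 k)%:Z = N.
Proof.
move=> /(_ k)/andP[lo hi] /andP[N_lt lt_N1].
have : (ones x 0 k)%:Z%:~R < (N + 1)%:~R :> R by apply: le_lt_trans lt_N1.
have : (N - 1)%:~R < (ones x 0 k)%:Z%:~R :> R by rewrite intrB; lra.
by rewrite !ltr_int; lia.
Qed.

(* [rotation_ones g c i] counts the 1's among the first [i] letters of the
   lower mechanical word of slope [g] read from position [-c]. *)
Definition rotation_floor (g : R) (c i : nat) : int := Num.floor ((i%:Z - c%:Z)%:~R * g).

Definition rotation_ones (g : R) (c i : nat) : int := rotation_floor g c i - rotation_floor g c 0.

Lemma rotation_ones_inj (g : R) n c c' :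
  (forall d : int, d != 0 -> d%:~R * g \isn't a Num.int) -> (c <= n)%N -> (c' <= n)%N ->
  (forall i, (i <= n)%N -> rotation_ones g c i = rotation_ones g c' i) -> c = c'.
Proof.
move=> g_nonint le_cn le_c'n eq_rot; apply/eqP; apply: contraT => neq_cc'.
have := floorDN_nonint (g_nonint (c%:Z - c'%:Z) _); rewrite subr_eq0 eqz_nat neq_cc'.
have := eq_rot c le_cn; have := eq_rot c' le_c'n.
rewrite /rotation_ones /rotation_floor !subrr mul0r floor0 -mulNr -intrN opprB.
move: (Num.floor _) (Num.floor _) (Num.floor _) (Num.floor _) => *; lia.
Qed.

Lemma exists_floor_gap (p n : nat) (gamma : 'I_p -> R) : exists2 e, 0 < e &
  forall j (i c : nat), (i <= n)%N -> (c <= n)%N ->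
    (i%:Z - c%:Z)%:~R * gamma j + e <= (rotation_floor (gamma j) c i + 1)%:~R.
Proof.
pose gap (t : 'I_p * 'I_(n.+1 + n)) :=
  (Num.floor ((t.2%:Z - n%:Z)%:~R * gamma t.1) + 1)%:~R - (t.2%:Z - n%:Z)%:~R * gamma t.1.
have [e e_gt0 le_e] : exists2 e, 0 < e & forall t, e <= gap t.
  by apply: exists_pos_lower_bound => t; rewrite subr_gt0 floorD1_gt.
exists e => // j i c le_in le_cn.
have lt_t : (i + n - c < n.+1 + n)%N by lia.
have := le_e (j, Ordinal lt_t); rewrite /gap /rotation_floor /=.
by rewrite (_ : _ - _ = i%:Z - c%:Z); [lra | lia].
Qed.

Section Windows.
Variables (p : nat) (gamma : 'I_p -> R) (xs : 'I_p -> binseq).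
Hypotheses (gamma_indep : Q_lin_indep_1 gamma) (xs_X : forall j, X_gamma (gamma j) (xs j)).

(* Kronecker's theorem places all [p] intercepts [k gamma_j + b_j] (mod 1)
   just above the point [- c_j gamma_j], so that the next [n] letters of
   [xs j] follow the rotation word started there. *)
Lemma exists_window n (c : 'I_p -> nat) : (forall j, (c j <= n)%N) ->
  exists k, forall j i, (i <= n)%N -> (ones (xs j) k i)%:Z = rotation_ones (gamma j) (c j) i.
Proof.
move=> le_cn.
have /choice[b line_b] j : exists b : R,
    forall k, k%:R * gamma j + b - 1 <= (ones (xs j) 0 k)%:R <= k%:R * gamma j + b.
  by case: (xs_X j) => _; apply: ones_intercept.
have [e e_gt0 gap_e] := exists_floor_gap n gamma.
pose y j := - (c j)%:R * gamma j + e / 2 - b j.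
have e4_gt0 : 0 < e / 4 by rewrite divr_gt0.
have [k [m approx]] := kronecker_nat (Q_lin_indep_int gamma_indep) (ord_ext y) e4_gt0.
exists k => j i le_in.
have ones_shift i' : (i' <= n)%N ->
    (ones (xs j) 0 (k + i'))%:Z = m j + rotation_floor (gamma j) (c j) i'.
  move=> le_i'n; apply: mechanical_ones_eq (line_b j) _.
  have := approx j (ltn_ord j); rewrite !ord_extE /y ltr_norml => /andP[? ?].
  have := gap_e j i' (c j) le_i'n (le_cn j); have := floor_le ((i'%:Z - (c j)%:Z)%:~R * gamma j).
  rewrite /rotation_floor !intrD intrN natrD -!pmulrn => ? ?; apply/andP; split; lra.
have := ones_shift i le_in; have := ones_shift 0%N (leq0n n).
rewrite addn0 (onesD _ 0 k i) add0n PoszD /rotation_ones; lia.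
Qed.

Lemma complexity_ge n : (n.+1 ^ p <= complexity xs n)%N.
Proof.
have /choice[pos posP] (c : {ffun 'I_p -> 'I_n.+1}) := exists_window (fun j => leq_ord (c j)).
pose window c := subword xs (pos c) n.
have window_inj : injective window.
  move=> c c' /subword_eq_ones eq_ones; apply/ffunP => j; apply: val_inj.
  apply: (rotation_ones_inj (n := n) (Q_lin_indep_nonint gamma_indep j)).
  - exact: leq_ord.
  - exact: leq_ord.
  - by move=> i le_in; rewrite -!posP // eq_ones.
have card_windows : #|window @: [set: {ffun 'I_p -> 'I_n.+1}]%SET| = (n.+1 ^ p)%N.
  by rewrite card_imset // cardsT card_ffun !card_ord.
rewrite /complexity -card_windows.
apply/subset_leq_card/fintype.subsetP => _ /imsetP[c _ ->].
by rewrite inE; apply/asboolP; exists (pos c).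
Qed.

End Windows.

End LowerBound.

Theorem lemma3 (R : realType) (p : nat) (gamma : 'I_p -> R) :
  (1 <= p)%N ->
  (forall j, (0 < gamma j)%R /\ (gamma j < 1)%R) ->
  Q_lin_indep_1 gamma ->
  forall xs : 'I_p -> binseq,
    (forall j, X_gamma (gamma j) (xs j)) ->
    forall n : nat, (1 <= n)%N -> complexity xs n = (n.+1 ^ p)%N.
Proof.
move=> _ _ gamma_indep xs xs_X n _; apply/eqP; rewrite eqn_leq.
by rewrite complexity_le ?(complexity_ge gamma_indep xs_X) // => j; case: (xs_X j).
Qed.
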